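(* Consider the problem $\min\{F(x,z): x\in\operatorname{conv}(X),\ z\in Z\}$ where $F:\mathbb{R}^n\times\mathbb{R}^q\to\mathbb{R}$ is convex and continuously differentiable, $X\subset\mathbb{R}^n$ is nonempty and compact (so $\operatorname{conv}(X)$ is convex and compact), $Z\subseteq\mathbb{R}^q$ is nonempty, closed and convex, and for each $x\in\operatorname{conv}(X)$ the map $z\mapsto F(x,z)$ is inf-compact on $Z$. Fix an integer $t_{\max}\ge1$. Let $x^0\in\operatorname{conv}(X)$, $z^0\in\arg\min_{z\in Z}F(x^0,z)$, and $D^0\subseteq\operatorname{conv}(X)$ be a nonempty closed convex set. For $k=0,1,2,\dots$ perform one SDM-GS iteration: set $(\tilde x,\tilde z)=(x^k,z^k)$; for $t=1,\dots,t_{\max}$ let $\tilde x\in\arg\min\{F(x,\tilde z): x\in D^k\}$ and then $\tilde z\in\arg\min\{F(\tilde x,z): z\in Z\}$; set $(x^{k+1},z^{k+1})=(\tilde x,\tilde z)$; choose $\hat x^{k+1}\in\arg\min\{\nabla_x F(x^{k+1},z^{k+1})(x-x^{k+1}): x\in X\}$; and let $D^{k+1}$ be any closed convex set with $\{x^{k+1}+\alpha(\hat x^{k+1}-x^{k+1}):\alpha\in[0,1]\}\subseteq D^{k+1}\subseteq\operatorname{conv}(X)$. Then the sequence $\{(x^k,z^k)\}$ has limit points, and every limit point $(\bar x,\bar z)$ is an optimal solution of $\min\{F(x,z): x\in\operatorname{conv}(X),\ z\in Z\}$.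
   Context: A function $z\mapsto g(z)$ is inf-compact on $Z$ if for every $\ell\in\mathbb{R}$ the set $\{z\in Z: g(z)\le\ell\}$ is compact. $\nabla_x F(x,z)$ denotes the partial gradient with respect to $x$, viewed as a row vector. *)

From Stdlib Require Import Reals Lra List.
From Stdlib Require Fin.
Open Scope R_scope.

Definition vec (n : nat) := Fin.t n -> R.

Definition vadd {n} (u v : vec n) : vec n := fun i => u i + v i.
Definition vsub {n} (u v : vec n) : vec n := fun i => u i - v i.
Definition vscal {n} (a : R) (u : vec n) : vec n := fun i => a * u i.
Definition vzero {n} : vec n := fun _ => 0.

Fixpoint vsum (n : nat) : (Fin.t n -> R) -> R :=
  match n with
  | O => fun _ => 0
  | S m => fun f => f Fin.F1 + vsum m (fun i => f (Fin.FS i))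
  end.

Definition dot {n} (u v : vec n) : R := vsum n (fun i => u i * v i).
Definition norm {n} (u : vec n) : R := sqrt (dot u u).

Definition vconv {n} (u : nat -> vec n) (l : vec n) : Prop :=
  forall eps, eps > 0 -> exists N, forall k, (k >= N)%nat -> norm (vsub (u k) l) < eps.

Definition is_closed {n} (S : vec n -> Prop) : Prop :=
  forall (u : nat -> vec n) l, (forall k, S (u k)) -> vconv u l -> S l.

Definition strictly_increasing (phi : nat -> nat) : Prop :=
  forall k, (phi k < phi (S k))%nat.

Definition is_compact {n} (S : vec n -> Prop) : Prop :=
  forall u : nat -> vec n, (forall k, S (u k)) ->
    exists phi l, strictly_increasing phi /\ S l /\ vconv (fun k => u (phi k)) l.

Definition is_convex {n} (S : vec n -> Prop) : Prop :=
  forall u v a, S u -> S v -> 0 <= a <= 1 ->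
    S (vadd (vscal a u) (vscal (1 - a) v)).

Definition nonempty {n} (S : vec n -> Prop) : Prop := exists u, S u.
Definition subset {n} (A B : vec n -> Prop) : Prop := forall u, A u -> B u.

Fixpoint lcomb {n} (l : list (R * vec n)) : vec n :=
  match l with
  | nil => vzero
  | (a, p) :: l' => vadd (vscal a p) (lcomb l')
  end.

Definition conv {n} (X : vec n -> Prop) : vec n -> Prop :=
  fun x => exists l : list (R * vec n),
    Forall (fun ap => 0 <= fst ap /\ X (snd ap)) l /\
    fold_right Rplus 0 (map fst l) = 1 /\
    x = lcomb l.

Definition jointly_convex {n q} (F : vec n -> vec q -> R) : Prop :=
  forall x1 z1 x2 z2 a, 0 <= a <= 1 ->
    F (vadd (vscal a x1) (vscal (1 - a) x2)) (vadd (vscal a z1) (vscal (1 - a) z2))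
    <= a * F x1 z1 + (1 - a) * F x2 z2.

Definition has_gradient {n q} (F : vec n -> vec q -> R) (x : vec n) (z : vec q)
  (gx : vec n) (gz : vec q) : Prop :=
  forall eps, eps > 0 -> exists delta, delta > 0 /\
    forall x' z', sqrt (Rsqr (norm (vsub x' x)) + Rsqr (norm (vsub z' z))) < delta ->
      Rabs (F x' z' - F x z - dot gx (vsub x' x) - dot gz (vsub z' z))
      <= eps * sqrt (Rsqr (norm (vsub x' x)) + Rsqr (norm (vsub z' z))).

Definition continuous2 {n q m} (G : vec n -> vec q -> vec m) : Prop :=
  forall x z eps, eps > 0 -> exists delta, delta > 0 /\
    forall x' z', sqrt (Rsqr (norm (vsub x' x)) + Rsqr (norm (vsub z' z))) < delta ->
      norm (vsub (G x' z') (G x z)) < eps.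

Definition C1_with_gradient {n q} (F : vec n -> vec q -> R)
  (Gx : vec n -> vec q -> vec n) (Gz : vec n -> vec q -> vec q) : Prop :=
  (forall x z, has_gradient F x z (Gx x z) (Gz x z)) /\
  continuous2 Gx /\ continuous2 Gz.

Definition is_argmin {n} (S : vec n -> Prop) (f : vec n -> R) (u : vec n) : Prop :=
  S u /\ forall v, S v -> f u <= f v.

Definition inf_compact {q} (Z : vec q -> Prop) (g : vec q -> R) : Prop :=
  forall l : R, is_compact (fun z => Z z /\ g z <= l).

Definition segment {n} (a b : vec n) : vec n -> Prop :=
  fun y => exists al, 0 <= al <= 1 /\ y = vadd a (vscal al (vsub b a)).

Definition is_limit_point {n q} (x : nat -> vec n) (z : nat -> vec q)
  (xb : vec n) (zb : vec q) : Prop :=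
  exists phi, strictly_increasing phi /\
    vconv (fun k => x (phi k)) xb /\ vconv (fun k => z (phi k)) zb.

Definition is_optimal {n q} (F : vec n -> vec q -> R) (C : vec n -> Prop)
  (Z : vec q -> Prop) (xb : vec n) (zb : vec q) : Prop :=
  C xb /\ Z zb /\ forall x z, C x -> Z z -> F xb zb <= F x z.

From Stdlib Require Import Reals Lra List Lia Rtopology.
From Stdlib Require Import FunctionalExtensionality ClassicalEpsilon Classical.
From Stdlib Require Fin.
Open Scope R_scope.

(** The values F(x^k, z^k) are nonincreasing from k = 1 on, since an inner Gauss-Seidel sweep
    never increases F and D^k contains x^k. The x^k stay in the compact set conv X, and the
    z^k stay bounded: in a level set of the jointly convex F, an unbounded sequence of z^k
    would produce a whole ray in a level set of z -> F(x^1, z), contradicting inf-compactness.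
    At a limit point (xb, zb), passing to the limit in the minimality of z^k and in the descent
    along the segments [x^k, xhat^k] (after extracting a limit xh of the xhat^k) shows that the
    partial gradients of F at (xb, zb) have nonnegative slope towards every point of Z and of X,
    hence of conv X. The gradient inequality of the convex F then makes (xb, zb) a global
    minimizer. *)

(** * Euclidean vectors *)

Lemma vec_ext {n} (u v : vec n) : (forall i, u i = v i) -> u = v.
Proof. intros; apply functional_extensionality; auto. Qed.

Lemma Rabs_le_inv a b : Rabs a <= b -> - b <= a <= b.
Proof. intros. pose proof (Rle_abs a). pose proof (Rle_abs (- a)). rewrite Rabs_Ropp in *. lra. Qed.

Ltac vring := apply vec_ext; intro; unfold vadd, vsub, vscal, vzero; ring.

Lemma vsum_ext n (f g : Fin.t n -> R) : (forall i, f i = g i) -> vsum n f = vsum n g.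
Proof.
  revert f g; induction n as [|n IH]; intros f g H; simpl; [reflexivity|].
  rewrite H, (IH _ (fun i => g (Fin.FS i))); auto.
Qed.

Lemma vsum_plus n (f g : Fin.t n -> R) :
  vsum n (fun i => f i + g i) = vsum n f + vsum n g.
Proof. revert f g; induction n as [|n IH]; intros; simpl; [lra|]. rewrite IH; lra. Qed.

Lemma vsum_scal n a (f : Fin.t n -> R) : vsum n (fun i => a * f i) = a * vsum n f.
Proof. revert f; induction n as [|n IH]; intros; simpl; [lra|]. rewrite IH; lra. Qed.

Lemma vsum_zero n : vsum n (fun _ => 0) = 0.
Proof. induction n as [|n IH]; simpl; lra. Qed.

Lemma vsum_le n (f g : Fin.t n -> R) : (forall i, f i <= g i) -> vsum n f <= vsum n g.
Proof.
  revert f g; induction n as [|n IH]; intros f g H; simpl; [lra|].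
  pose proof (H Fin.F1).
  pose proof (IH (fun i => f (Fin.FS i)) (fun i => g (Fin.FS i)) (fun i => H _)). lra.
Qed.

Lemma vsum_nonneg n (f : Fin.t n -> R) : (forall i, 0 <= f i) -> 0 <= vsum n f.
Proof. intros. rewrite <- (vsum_zero n). apply vsum_le; auto. Qed.

Lemma vsum_ge_term n (f : Fin.t n -> R) : (forall i, 0 <= f i) -> forall i, f i <= vsum n f.
Proof.
  intros Hf i; induction i as [m|m i IH]; simpl.
  - pose proof (vsum_nonneg m (fun i => f (Fin.FS i)) (fun i => Hf _)). lra.
  - pose proof (Hf Fin.F1). pose proof (IH (fun j => f (Fin.FS j)) (fun j => Hf _)). lra.
Qed.

Lemma dot_comm n (u v : vec n) : dot u v = dot v u.
Proof. apply vsum_ext; intros; ring. Qed.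

Lemma dot_add_r n (u v w : vec n) : dot u (vadd v w) = dot u v + dot u w.
Proof. unfold dot, vadd. rewrite <- vsum_plus. apply vsum_ext; intros; ring. Qed.

Lemma dot_add_l n (u v w : vec n) : dot (vadd v w) u = dot v u + dot w u.
Proof. rewrite !(dot_comm _ _ u). apply dot_add_r. Qed.

Lemma dot_scal_r n a (u v : vec n) : dot u (vscal a v) = a * dot u v.
Proof. unfold dot, vscal. rewrite <- vsum_scal. apply vsum_ext; intros; ring. Qed.

Lemma dot_scal_l n a (u v : vec n) : dot (vscal a v) u = a * dot v u.
Proof. rewrite !(dot_comm _ _ u). apply dot_scal_r. Qed.

Lemma dot_sub_r n (u v w : vec n) : dot u (vsub v w) = dot u v - dot u w.
Proof.
  replace (vsub v w) with (vadd v (vscal (-1) w)) by vring.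
  rewrite dot_add_r, dot_scal_r. ring.
Qed.

Lemma dot_sub_l n (u v w : vec n) : dot (vsub v w) u = dot v u - dot w u.
Proof. rewrite !(dot_comm _ _ u). apply dot_sub_r. Qed.

Lemma dot_zero_r n (u : vec n) : dot u vzero = 0.
Proof. replace (@vzero n) with (vscal 0 (@vzero n)) by vring. rewrite dot_scal_r; ring. Qed.

Lemma dot_self_nonneg n (u : vec n) : 0 <= dot u u.
Proof. apply vsum_nonneg; intros; apply Rle_0_sqr. Qed.

Lemma norm_nonneg n (u : vec n) : 0 <= norm u.
Proof. apply sqrt_pos. Qed.

Lemma norm_sq n (u : vec n) : norm u * norm u = dot u u.
Proof. apply sqrt_sqrt, dot_self_nonneg. Qed.

Lemma sqrt_le_of_sq x c : 0 <= c -> x <= c * c -> sqrt x <= c.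
Proof.
  intros Hc Hx. rewrite <- (sqrt_square c) by auto.
  destruct (Rle_lt_dec 0 x).
  - apply sqrt_le_1; nra.
  - rewrite sqrt_neg_0 by lra. apply sqrt_pos.
Qed.

Lemma coord_le_norm n (u : vec n) i : Rabs (u i) <= norm u.
Proof.
  rewrite <- sqrt_Rsqr_abs. apply sqrt_le_1_alt.
  apply (vsum_ge_term n (fun i => u i * u i)). intros; apply Rle_0_sqr.
Qed.

Lemma norm_eq0_coord n (u : vec n) : norm u = 0 -> forall i, u i = 0.
Proof.
  intros Hu i. pose proof (coord_le_norm n u i). pose proof (Rabs_pos (u i)).
  destruct (Req_dec (u i) 0) as [|Hne]; [auto|]. apply Rabs_no_R0 in Hne. lra.
Qed.

Lemma dot_norm_eq0 n (u v : vec n) : norm u = 0 -> dot u v = 0.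
Proof.
  intros Hu. rewrite <- (vsum_zero n). apply vsum_ext; intro i.
  rewrite (norm_eq0_coord n u Hu i); ring.
Qed.

Lemma cauchy_schwarz n (u v : vec n) : Rabs (dot u v) <= norm u * norm v.
Proof.
  pose proof (norm_nonneg n u) as Hu0. pose proof (norm_nonneg n v) as Hv0.
  destruct (Req_dec (norm u) 0) as [Hu|Hu].
  { rewrite dot_norm_eq0, Rabs_R0 by auto. nra. }
  destruct (Req_dec (norm v) 0) as [Hv|Hv].
  { rewrite dot_comm, dot_norm_eq0, Rabs_R0 by auto. nra. }
  set (a := norm u) in *. set (b := norm v) in *.
  (* expand |b u -+ a v|^2 >= 0 *)
  assert (E1 := dot_self_nonneg n (vsub (vscal b u) (vscal a v))).
  assert (E2 := dot_self_nonneg n (vadd (vscal b u) (vscal a v))).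
  rewrite dot_sub_l, !dot_sub_r, !dot_scal_l, !dot_scal_r in E1.
  rewrite dot_add_l, !dot_add_r, !dot_scal_l, !dot_scal_r in E2.
  rewrite (dot_comm _ v u) in E1, E2. rewrite <- !norm_sq in E1, E2. fold a b in E1, E2.
  assert (Hab : a * b > 0) by (apply Rmult_lt_0_compat; lra).
  apply Rabs_le; split; apply Rmult_le_reg_l with (a * b); nra.
Qed.

Lemma dot_le_norm_mul n (u v : vec n) : dot u v <= norm u * norm v.
Proof. eapply Rle_trans; [apply Rle_abs|apply cauchy_schwarz]. Qed.

Lemma norm_triangle n (u v : vec n) : norm (vadd u v) <= norm u + norm v.
Proof.
  pose proof (norm_nonneg n u); pose proof (norm_nonneg n v).
  apply sqrt_le_of_sq; [lra|].
  rewrite dot_add_l, !dot_add_r, (dot_comm _ v u), <- !norm_sq.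
  pose proof (dot_le_norm_mul n u v). nra.
Qed.

Lemma norm_scal n a (u : vec n) : norm (vscal a u) = Rabs a * norm u.
Proof.
  unfold norm. rewrite dot_scal_l, dot_scal_r, <- Rmult_assoc.
  change (a * a) with (Rsqr a). rewrite sqrt_mult_alt by apply Rle_0_sqr.
  now rewrite sqrt_Rsqr_abs.
Qed.

Lemma norm_sub_sym n (u v : vec n) : norm (vsub u v) = norm (vsub v u).
Proof.
  replace (vsub u v) with (vscal (-1) (vsub v u)) by vring.
  rewrite norm_scal, (Rabs_left (-1)) by lra. ring.
Qed.

Lemma norm_sub_triangle n (u v w : vec n) :
  norm (vsub u w) <= norm (vsub u v) + norm (vsub v w).
Proof. replace (vsub u w) with (vadd (vsub u v) (vsub v w)) by vring. apply norm_triangle. Qed.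

Lemma norm_sub_le n (u v : vec n) : norm (vsub u v) <= norm u + norm v.
Proof.
  replace (vsub u v) with (vadd u (vscal (-1) v)) by vring.
  eapply Rle_trans; [apply norm_triangle|]. rewrite norm_scal, (Rabs_left (-1)) by lra. lra.
Qed.

Lemma norm_le_sub n (u v : vec n) : norm u <= norm (vsub u v) + norm v.
Proof. replace u with (vadd (vsub u v) v) at 1 by vring. apply norm_triangle. Qed.

Lemma norm_sub_self n (u : vec n) : norm (vsub u u) = 0.
Proof.
  replace (vsub u u) with (vscal 0 u) by vring. rewrite norm_scal, Rabs_R0. ring.
Qed.

Definition pnorm {n q} (x : vec n) (z : vec q) := sqrt (Rsqr (norm x) + Rsqr (norm z)).

Lemma pnorm_nonneg n q (x : vec n) (z : vec q) : 0 <= pnorm x z.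
Proof. apply sqrt_pos. Qed.

Lemma pnorm_le n q (x : vec n) (z : vec q) : pnorm x z <= norm x + norm z.
Proof.
  pose proof (norm_nonneg _ x); pose proof (norm_nonneg _ z).
  apply sqrt_le_of_sq; unfold Rsqr; nra.
Qed.

Lemma pnorm_scal n q a (u : vec n) (v : vec q) :
  pnorm (vscal a u) (vscal a v) = Rabs a * pnorm u v.
Proof.
  unfold pnorm. rewrite !norm_scal, !Rsqr_mult, <- Rmult_plus_distr_l.
  rewrite sqrt_mult_alt by apply Rle_0_sqr. now rewrite sqrt_Rsqr_abs, Rabs_Rabsolu.
Qed.

(** * Sequences *)

Lemma strictly_increasing_ge phi : strictly_increasing phi -> forall k, (k <= phi k)%nat.
Proof. intros H k; induction k; [lia|]. specialize (H k). lia. Qed.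

Lemma strictly_increasing_comp phi psi :
  strictly_increasing phi -> strictly_increasing psi ->
  strictly_increasing (fun k => phi (psi k)).
Proof.
  intros H1 H2 k.
  assert (Hlt : forall a b, (a < b)%nat -> (phi a < phi b)%nat).
  { intros a b Hab; induction Hab; [apply H1|]. specialize (H1 m). lia. }
  apply Hlt, H2.
Qed.

Lemma Un_cv_const c : Un_cv (fun _ => c) c.
Proof. intros eps Heps. exists O. intros. unfold Rdist. rewrite Rminus_diag, Rabs_R0. lra. Qed.

Lemma Un_cv_in_interval u l a b : Un_cv u l -> (forall k, a <= u k <= b) -> a <= l <= b.
Proof.
  intros Hu Hab. split;
    [apply (@Rle_cv_lim (fun _ => a) u)|apply (@Rle_cv_lim u (fun _ => b))];
    auto using Un_cv_const; intro k; apply Hab.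
Qed.

Lemma Un_cv_subseq u l phi : strictly_increasing phi -> Un_cv u l -> Un_cv (fun k => u (phi k)) l.
Proof.
  intros Hphi H eps Heps. destruct (H eps Heps) as [N HN]. exists N. intros k Hk.
  apply HN. pose proof (strictly_increasing_ge phi Hphi k). lia.
Qed.

Lemma vconv_subseq n (u : nat -> vec n) l phi :
  strictly_increasing phi -> vconv u l -> vconv (fun k => u (phi k)) l.
Proof.
  intros Hphi H eps Heps. destruct (H eps Heps) as [N HN]. exists N. intros k Hk.
  apply HN. pose proof (strictly_increasing_ge phi Hphi k). lia.
Qed.

Lemma vconv_ext n (u v : nat -> vec n) l : (forall k, u k = v k) -> vconv u l -> vconv v l.
Proof. intros He H eps Heps. destruct (H eps Heps) as [N HN]. exists N. intros. rewrite <- He. auto. Qed.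

Lemma vconv_const n (l : vec n) : vconv (fun _ => l) l.
Proof. intros eps H. exists O. intros. rewrite norm_sub_self. lra. Qed.

Lemma vconv_unique n (u : nat -> vec n) l1 l2 : vconv u l1 -> vconv u l2 -> l1 = l2.
Proof.
  intros H1 H2.
  assert (Hz : norm (vsub l1 l2) = 0).
  { pose proof (norm_nonneg _ (vsub l1 l2)).
    destruct (Req_dec (norm (vsub l1 l2)) 0) as [|Hne]; auto. exfalso.
    set (e := norm (vsub l1 l2)) in *.
    destruct (H1 (e/2)) as [N1 HN1]; [lra|]. destruct (H2 (e/2)) as [N2 HN2]; [lra|].
    specialize (HN1 (max N1 N2) ltac:(lia)). specialize (HN2 (max N1 N2) ltac:(lia)).
    pose proof (norm_sub_triangle _ l1 (u (max N1 N2)) l2).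
    rewrite norm_sub_sym in HN1. fold e in H0. lra. }
  apply vec_ext; intro i. pose proof (norm_eq0_coord _ _ Hz i). unfold vsub in H. lra.
Qed.

Lemma vconv_add n (u v : nat -> vec n) a b :
  vconv u a -> vconv v b -> vconv (fun k => vadd (u k) (v k)) (vadd a b).
Proof.
  intros Hu Hv eps He.
  destruct (Hu (eps/2)) as [N1 H1]; [lra|]. destruct (Hv (eps/2)) as [N2 H2]; [lra|].
  exists (max N1 N2). intros k Hk.
  specialize (H1 k ltac:(lia)). specialize (H2 k ltac:(lia)).
  replace (vsub (vadd (u k) (v k)) (vadd a b)) with (vadd (vsub (u k) a) (vsub (v k) b)) by vring.
  eapply Rle_lt_trans; [apply norm_triangle|]. lra.
Qed.

Lemma vconv_sub n (u v : nat -> vec n) a b :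
  vconv u a -> vconv v b -> vconv (fun k => vsub (u k) (v k)) (vsub a b).
Proof.
  intros Hu Hv eps He.
  destruct (Hu (eps/2)) as [N1 H1]; [lra|]. destruct (Hv (eps/2)) as [N2 H2]; [lra|].
  exists (max N1 N2). intros k Hk.
  specialize (H1 k ltac:(lia)). specialize (H2 k ltac:(lia)). rewrite norm_sub_sym in H2.
  replace (vsub (vsub (u k) (v k)) (vsub a b)) with (vadd (vsub (u k) a) (vsub b (v k))) by vring.
  eapply Rle_lt_trans; [apply norm_triangle|]. lra.
Qed.

Lemma vconv_scal n (a : nat -> R) (p : nat -> vec n) al P :
  Un_cv a al -> vconv p P -> vconv (fun k => vscal (a k) (p k)) (vscal al P).
Proof.
  intros Ha Hp eps He.
  destruct (maj_by_pos a (exist _ al Ha)) as [B [HB0 HB]].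
  pose proof (norm_nonneg _ P).
  destruct (Ha (eps / (2 * (norm P + 1)))) as [N1 H1]; [apply Rdiv_lt_0_compat; lra|].
  destruct (Hp (eps / (2 * B))) as [N2 H2]; [apply Rdiv_lt_0_compat; lra|].
  exists (max N1 N2). intros k Hk.
  specialize (H1 k ltac:(lia)). specialize (H2 k ltac:(lia)). unfold Rdist in H1.
  replace (vsub (vscal (a k) (p k)) (vscal al P))
    with (vadd (vscal (a k) (vsub (p k) P)) (vscal (a k - al) P)) by vring.
  eapply Rle_lt_trans; [apply norm_triangle|]. rewrite !norm_scal.
  specialize (HB k). pose proof (norm_nonneg _ (vsub (p k) P)).
  pose proof (Rabs_pos (a k - al)). pose proof (Rabs_pos (a k)).
  assert (Rabs (a k) * norm (vsub (p k) P) <= B * (eps / (2 * B)))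
    by (apply Rmult_le_compat; lra).
  assert (Rabs (a k - al) * norm P < eps / (2 * (norm P + 1)) * (norm P + 1)).
  { apply Rle_lt_trans with (Rabs (a k - al) * (norm P + 1)).
    - apply Rmult_le_compat_l; lra.
    - apply Rmult_lt_compat_r; lra. }
  replace (B * (eps / (2 * B))) with (eps / 2) in * by (field; lra).
  replace (eps / (2 * (norm P + 1)) * (norm P + 1)) with (eps / 2) in * by (field; lra).
  lra.
Qed.

Lemma vconv_coord n (u : nat -> vec n) l : vconv u l -> forall i, Un_cv (fun k => u k i) (l i).
Proof.
  intros H i eps Heps. destruct (H eps Heps) as [N HN]. exists N. intros k Hk.
  eapply Rle_lt_trans; [|apply (HN k Hk)]. apply (coord_le_norm n (vsub (u k) l) i).
Qed.

Lemma Un_cv_vsum n (f : nat -> Fin.t n -> R) (l : Fin.t n -> R) :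
  (forall i, Un_cv (fun k => f k i) (l i)) -> Un_cv (fun k => vsum n (f k)) (vsum n l).
Proof.
  revert f l; induction n as [|n IH]; intros f l H; simpl.
  - apply Un_cv_const.
  - apply CV_plus; [apply H|]. apply (IH (fun k i => f k (Fin.FS i))). intro; apply H.
Qed.

Lemma Un_cv_dot n (u v : nat -> vec n) a b :
  vconv u a -> vconv v b -> Un_cv (fun k => dot (u k) (v k)) (dot a b).
Proof.
  intros Hu Hv. apply (Un_cv_vsum n (fun k i => u k i * v k i)).
  intro i. apply CV_mult; apply vconv_coord; auto.
Qed.

Lemma Un_cv_norm n (u : nat -> vec n) l : vconv u l -> Un_cv (fun k => norm (u k)) (norm l).
Proof.
  intros H eps He. destruct (H eps He) as [N HN]. exists N. intros k Hk.
  specialize (HN k Hk). unfold Rdist.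
  pose proof (norm_le_sub _ (u k) l). pose proof (norm_le_sub _ l (u k)).
  rewrite norm_sub_sym in H1. apply Rabs_def1; lra.
Qed.

Lemma extract_subseq (P : nat -> nat -> Prop) :
  (forall N k, exists p, (N <= p)%nat /\ P k p) ->
  exists phi, strictly_increasing phi /\ forall k, P k (phi k).
Proof.
  intros H.
  assert (sel : forall N k, {p | (N <= p)%nat /\ P k p})
    by (intros; apply constructive_indefinite_description; auto).
  set (phi := fix f (k : nat) : nat :=
         match k with O => proj1_sig (sel O O) | S k' => proj1_sig (sel (S (f k')) (S k')) end).
  exists phi. split.
  - intro k. change (phi k < proj1_sig (sel (S (phi k)) (S k)))%nat.
    pose proof (proj2_sig (sel (S (phi k)) (S k))). simpl in H0. lia.
  - intros [|k]; [exact (proj2 (proj2_sig (sel O O)))|].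
    exact (proj2 (proj2_sig (sel (S (phi k)) (S k)))).
Qed.

Lemma bolzano_weierstrass_R (u : nat -> R) M : (forall k, Rabs (u k) <= M) ->
  exists phi l, strictly_increasing phi /\ Un_cv (fun k => u (phi k)) l.
Proof.
  intros H.
  destruct (Bolzano_Weierstrass u (fun c => -M <= c <= M) (compact_P3 (-M) M)) as [l Hl].
  { intro k. specialize (H k). apply Rabs_le_inv in H. auto. }
  assert (HP : forall N k, exists p, (N <= p)%nat /\ Rabs (u p - l) < / INR (S k)).
  { intros N k. assert (Hpos : 0 < / INR (S k)) by (apply Rinv_0_lt_compat, lt_0_INR; lia).
    destruct (Hl (disc l (mkposreal _ Hpos)) N) as [p Hp]; [|exists p; exact Hp].
    exists (mkposreal _ Hpos). intros y Hy. exact Hy. }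
  destruct (extract_subseq _ HP) as [phi [Hphi Hphi2]]. exists phi, l. split; auto.
  intros eps Heps. destruct (INR_unbounded (/eps)) as [N HN]. exists N. intros k Hk.
  eapply Rlt_le_trans; [apply Hphi2|].
  assert (INR (S k) > / eps) by (apply Rlt_le_trans with (INR N); auto; apply le_INR; lia).
  assert (0 < / eps) by (apply Rinv_0_lt_compat; lra).
  rewrite <- (Rinv_inv eps). apply Rlt_le, Rinv_lt_contravar; nra.
Qed.

Definition vtail {m} (v : vec (S m)) : vec m := fun i => v (Fin.FS i).
Definition vcons {m} (a : R) (v : vec m) : vec (S m) := fun i => Fin.caseS' i (fun _ => R) a v.

Lemma Fin_caseS_ind m (P : Fin.t (S m) -> Prop) :
  P Fin.F1 -> (forall j, P (Fin.FS j)) -> forall i, P i.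
Proof. intros H1 H2 i. refine (Fin.caseS' i _ _ _); auto. Qed.

Lemma norm_vtail_le m (v : vec (S m)) : norm (vtail v) <= norm v.
Proof. apply sqrt_le_1_alt. change (dot (vtail v) (vtail v) <= v Fin.F1 * v Fin.F1 + dot (vtail v) (vtail v)).
  pose proof (Rle_0_sqr (v Fin.F1)). unfold Rsqr in *. lra. Qed.

Lemma norm_le_head_tail m (v : vec (S m)) : norm v <= Rabs (v Fin.F1) + norm (vtail v).
Proof.
  pose proof (Rabs_pos (v Fin.F1)); pose proof (norm_nonneg _ (vtail v)).
  apply sqrt_le_of_sq; [lra|].
  change (v Fin.F1 * v Fin.F1 + dot (vtail v) (vtail v)
          <= (Rabs (v Fin.F1) + norm (vtail v)) * (Rabs (v Fin.F1) + norm (vtail v))).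
  assert (E : v Fin.F1 * v Fin.F1 = Rabs (v Fin.F1) * Rabs (v Fin.F1))
    by (rewrite <- Rabs_mult; symmetry; apply Rabs_right, Rle_ge, Rle_0_sqr).
  rewrite E, <- norm_sq. nra.
Qed.

Lemma bolzano_weierstrass n (u : nat -> vec n) M : (forall k, norm (u k) <= M) ->
  exists phi l, strictly_increasing phi /\ vconv (fun k => u (phi k)) l.
Proof.
  revert u; induction n as [|n IH]; intros u Hu.
  - exists (fun k => k), vzero. split; [intro; lia|]. intros eps Heps. exists O. intros.
    unfold norm, dot. simpl. rewrite sqrt_0. lra.
  - destruct (bolzano_weierstrass_R (fun k => u k Fin.F1) M) as [phi1 [l1 [Hp1 Hc1]]].
    { intro k. eapply Rle_trans; [apply coord_le_norm|auto]. }
    destruct (IH (fun k => vtail (u (phi1 k)))) as [phi2 [l2 [Hp2 Hc2]]].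
    { intro k. eapply Rle_trans; [apply norm_vtail_le|auto]. }
    exists (fun k => phi1 (phi2 k)), (vcons l1 l2).
    split; [apply strictly_increasing_comp; auto|].
    intros eps Heps.
    destruct (Un_cv_subseq _ _ _ Hp2 Hc1 (eps/2)) as [N1 HN1]; [lra|].
    destruct (Hc2 (eps/2)) as [N2 HN2]; [lra|]. exists (max N1 N2). intros k Hk.
    eapply Rle_lt_trans; [apply norm_le_head_tail|].
    specialize (HN1 k ltac:(lia)). specialize (HN2 k ltac:(lia)). unfold Rdist in HN1.
    change (Rabs (u (phi1 (phi2 k)) Fin.F1 - l1)
            + norm (vsub (vtail (u (phi1 (phi2 k)))) l2) < eps). lra.
Qed.

Lemma compact_bounded n (S : vec n -> Prop) : is_compact S -> exists M, forall u, S u -> norm u <= M.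
Proof.
  intros HS. apply NNPP. intro HN.
  assert (sel : forall k : nat, {u | S u /\ norm u > INR k}).
  { intro k. apply constructive_indefinite_description. apply NNPP. intro H. apply HN.
    exists (INR k). intros u Hu. apply Rnot_lt_le. intro. apply H. exists u; auto. }
  destruct (HS (fun k => proj1_sig (sel k))) as [phi [l [Hphi [_ Hc]]]].
  { intro k; exact (proj1 (proj2_sig (sel k))). }
  destruct (Hc 1) as [N HN1]; [lra|].
  destruct (INR_unbounded (norm l + 1)) as [K HK].
  set (j := max N K). specialize (HN1 j ltac:(lia)).
  pose proof (proj2 (proj2_sig (sel (phi j)))) as Hbig.
  pose proof (norm_le_sub _ (proj1_sig (sel (phi j))) l).
  pose proof (le_INR _ _ (strictly_increasing_ge _ Hphi j)).
  pose proof (le_INR K j ltac:(lia)). lra.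
Qed.

Lemma compact_closed n (S : vec n -> Prop) : is_compact S -> is_closed S.
Proof.
  intros HS u l Hu Hc. destruct (HS u Hu) as [phi [l' [Hphi [Hl' Hc']]]].
  replace l with l'; auto.
  apply (vconv_unique _ (fun k => u (phi k))); auto. apply vconv_subseq; auto.
Qed.

(** * Convex hulls *)

Definition lsum {T} (h : T -> R) (l : list T) : R := fold_right Rplus 0 (map h l).

Lemma lsum_cons T (h : T -> R) a l : lsum h (a :: l) = h a + lsum h l.
Proof. reflexivity. Qed.

Lemma lsum_app T (h : T -> R) l1 l2 : lsum h (l1 ++ l2) = lsum h l1 + lsum h l2.
Proof. induction l1; simpl; [unfold lsum; simpl; lra|]. rewrite !lsum_cons, IHl1. lra. Qed.

Lemma lsum_ext T (h g : T -> R) l : (forall a, In a l -> h a = g a) -> lsum h l = lsum g l.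
Proof.
  induction l as [|a l IH]; intros H; [reflexivity|].
  rewrite !lsum_cons, (H a (or_introl eq_refl)), IH; [reflexivity|].
  intros; apply H; right; auto.
Qed.

Lemma lsum_plus T (h g : T -> R) l : lsum (fun a => h a + g a) l = lsum h l + lsum g l.
Proof. induction l; [unfold lsum; simpl; lra|]. rewrite !lsum_cons, IHl. lra. Qed.

Lemma lsum_scal T (h : T -> R) c l : lsum (fun a => c * h a) l = c * lsum h l.
Proof. induction l; [unfold lsum; simpl; lra|]. rewrite !lsum_cons, IHl. lra. Qed.

Lemma lsum_map T U (h : U -> R) (g : T -> U) l : lsum h (map g l) = lsum (fun a => h (g a)) l.
Proof. unfold lsum. now rewrite map_map. Qed.

Lemma lsum_le T (h g : T -> R) l : (forall a, In a l -> h a <= g a) -> lsum h l <= lsum g l.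
Proof.
  induction l as [|a l IH]; intros H; [unfold lsum; simpl; lra|]. rewrite !lsum_cons.
  pose proof (H a (or_introl eq_refl)). assert (lsum h l <= lsum g l) by (apply IH; intros; apply H; right; auto).
  lra.
Qed.

Lemma lsum_eq0 T (h : T -> R) l : (forall a, In a l -> h a = 0) -> lsum h l = 0.
Proof.
  intros H. transitivity (lsum (fun _ => 0) l); [apply lsum_ext; auto|].
  clear H. induction l; [reflexivity|]. rewrite lsum_cons, IHl. lra.
Qed.

Lemma lsum_ge_term T (h : T -> R) l a : Forall (fun e => 0 <= h e) l -> In a l -> h a <= lsum h l.
Proof.
  intros Hl Ha. rewrite Forall_forall in Hl.
  induction l as [|b l IH]; [destruct Ha|]. rewrite lsum_cons. destruct Ha as [<-|Ha].
  - assert (0 <= lsum h l) by (rewrite <- (lsum_eq0 T (fun _ => 0) l) by auto;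
                             apply lsum_le; intros; apply Hl; right; auto).
    lra.
  - pose proof (Hl b (or_introl eq_refl)). assert (h a <= lsum h l) by (apply IH; [intros; apply Hl; right|]; auto).
    lra.
Qed.

Lemma lsum_neg T (h : T -> R) l :
  Forall (fun e => h e <= 0) l -> Exists (fun e => h e <> 0) l -> lsum h l < 0.
Proof.
  intros HF HE. assert (Hle : forall l, Forall (fun e => h e <= 0) l -> lsum h l <= 0).
  { intros l' H'; induction H'; [unfold lsum; simpl; lra|]. rewrite lsum_cons. lra. }
  induction HE as [a l Ha|a l _ IH]; rewrite lsum_cons; inversion HF; subst.
  - pose proof (Hle l H2). lra.
  - pose proof (IH H2). lra.
Qed.

Lemma lsum_eq0_exists_pos T (h : T -> R) l :
  lsum h l = 0 -> Exists (fun e => h e <> 0) l -> Exists (fun e => h e > 0) l.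
Proof.
  intros H0 Hne. apply NNPP. intro HN.
  assert (Forall (fun e => h e <= 0) l).
  { apply Forall_forall. intros a Ha. apply Rnot_lt_le. intro. apply HN, Exists_exists. eauto. }
  pose proof (lsum_neg T h l H Hne). lra.
Qed.

Lemma exists_min_ratio T (c r : T -> R) l : Exists (fun e => c e > 0) l ->
  exists e, In e l /\ c e > 0 /\ forall e', In e' l -> c e' > 0 -> r e <= r e'.
Proof.
  induction l as [|a l IH]; intros H; [inversion H|].
  destruct (classic (Exists (fun e => c e > 0) l)) as [Hl|Hl].
  - destruct (IH Hl) as [e [He1 [He2 He3]]].
    destruct (Rle_lt_dec (r e) (r a)); [|destruct (Rlt_le_dec 0 (c a))].
    + exists e. repeat split; simpl; auto. intros e' [<-|He'] Hc; auto.
    + exists a. repeat split; simpl; auto. intros e' [<-|He'] Hc; [lra|]. specialize (He3 e' He' Hc). lra.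
    + exists e. repeat split; simpl; auto. intros e' [<-|He'] Hc; [lra|auto].
  - inversion H; subst; [|contradiction]. exists a. repeat split; simpl; auto.
    intros e' [<-|He'] Hc; [lra|]. exfalso. apply Hl, Exists_exists. eauto.
Qed.

Lemma lcomb_coord n (l : list (R * vec n)) j : lcomb l j = lsum (fun ap => fst ap * snd ap j) l.
Proof. induction l as [|[a p] l IH]; simpl; [reflexivity|]. rewrite lsum_cons. unfold vadd, vscal. now rewrite IH. Qed.

Lemma lcomb_app n (l1 l2 : list (R * vec n)) : lcomb (l1 ++ l2) = vadd (lcomb l1) (lcomb l2).
Proof. apply vec_ext. intro j. unfold vadd. rewrite !lcomb_coord. apply lsum_app. Qed.

Lemma dot_lcomb n (g : vec n) (l : list (R * vec n)) :
  dot g (lcomb l) = lsum (fun ap => fst ap * dot g (snd ap)) l.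
Proof.
  induction l as [|[a p] l IH]; simpl; [apply dot_zero_r|].
  rewrite lsum_cons, dot_add_r, dot_scal_r, IH. reflexivity.
Qed.

Definition lin_dependent {T} N (f : T -> vec N) (l : list T) : Prop :=
  exists cl : list (R * T), map snd cl = l /\
    (forall i, lsum (fun ct => fst ct * f (snd ct) i) cl = 0) /\ Exists (fun ct => fst ct <> 0) cl.

Lemma lin_dependent_of_length N T (f : T -> vec N) (l : list T) :
  (length l > N)%nat -> lin_dependent N f l.
Proof.
  revert T f l; induction N as [|N IH]; intros T f l Hl.
  - destruct l as [|t l]; [simpl in Hl; lia|].
    exists ((1, t) :: map (fun t => (0, t)) l). repeat split.
    + simpl. rewrite map_map. simpl. now rewrite map_id.
    + intro i. exact (Fin.case0 (fun i => lsum _ _ = 0) i).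
    + constructor. simpl. lra.
  - destruct (classic (exists p, In p l /\ f p Fin.F1 <> 0)) as [[p [Hp Hc]]|Hno].
    + (* eliminate the first coordinate using the pivot [p] *)
      destruct (in_split _ _ Hp) as [a [b Hab]]. set (c0 := f p Fin.F1) in *.
      set (g := fun t => vtail (vsub (f t) (vscal (f t Fin.F1 / c0) (f p)))).
      destruct (IH T g (a ++ b)) as [cl [Hcl1 [Hcl2 Hcl3]]].
      { rewrite Hab, length_app in Hl. rewrite length_app. simpl in Hl. lia. }
      destruct (map_eq_app _ _ _ _ Hcl1) as [ca [cb [Hcc [Ha Hb]]]].
      set (cp := - lsum (fun ct => fst ct * f (snd ct) Fin.F1) cl / c0).
      assert (E : forall i, lsum (fun ct => fst ct * f (snd ct) i) (ca ++ (cp, p) :: cb)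
                            = lsum (fun ct => fst ct * f (snd ct) i) cl + cp * f p i).
      { intro i. rewrite Hcc, !lsum_app, lsum_cons. simpl. lra. }
      exists (ca ++ (cp, p) :: cb). repeat split.
      * rewrite map_app. simpl. now rewrite Ha, Hb.
      * apply Fin_caseS_ind; intros; rewrite E.
        -- unfold cp. fold c0. field. auto.
        -- specialize (Hcl2 j). unfold g, vtail, vsub, vscal in Hcl2.
           set (s1 := lsum (fun ct => fst ct * f (snd ct) Fin.F1) cl) in *.
           assert (Hsplit : lsum (fun ct => fst ct * (f (snd ct) (Fin.FS j)
                              - f (snd ct) Fin.F1 / c0 * f p (Fin.FS j))) cl
                   = lsum (fun ct => fst ct * f (snd ct) (Fin.FS j)) cl
                     + - (f p (Fin.FS j) / c0) * s1).
           { unfold s1. rewrite <- lsum_scal, <- lsum_plus. apply lsum_ext. intros. field. auto. }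
           unfold cp. replace (- s1 / c0 * f p (Fin.FS j)) with (- (f p (Fin.FS j) / c0) * s1)
             by (field; auto).
           lra.
      * rewrite Hcc in Hcl3. apply Exists_app in Hcl3. apply Exists_app.
        destruct Hcl3; [left|right; right]; auto.
    + destruct (IH T (fun t => vtail (f t)) l) as [cl [Hcl1 [Hcl2 Hcl3]]]; [lia|].
      exists cl. repeat split; auto. apply Fin_caseS_ind.
      * apply lsum_eq0. intros ct Hct. replace (f (snd ct) Fin.F1) with 0; [ring|].
        apply NNPP. intro. apply Hno. exists (snd ct). split; auto.
        rewrite <- Hcl1. apply in_map; auto.
      * exact Hcl2.
Qed.

Lemma sub_min_ratio_nonneg lam c t :
  0 <= lam -> 0 <= t -> (c > 0 -> t <= lam / c) -> 0 <= lam - t * c.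
Proof.
  intros Hlam Ht Hmin. destruct (Rlt_le_dec 0 c) as [Hc|]; [|nra].
  specialize (Hmin Hc). apply Rmult_le_compat_r with (r := c) in Hmin; [|lra].
  replace (lam / c * c) with lam in Hmin by (field; lra). lra.
Qed.

Definition convex_weights {n} (X : vec n -> Prop) (l : list (R * vec n)) :=
  Forall (fun ap => 0 <= fst ap /\ X (snd ap)) l /\ lsum fst l = 1.

Lemma caratheodory_step n X (l : list (R * vec n)) :
  convex_weights X l -> (length l > S n)%nat ->
  exists l', convex_weights X l' /\ length l' = pred (length l) /\ lcomb l' = lcomb l.
Proof.
  intros [HF HS] Hlen.
  destruct (lin_dependent_of_length (S n) _ (fun ap => vcons 1 (snd ap)) l Hlen)
    as [cl [Hm [Hs Hex]]].
  assert (Hs1 : lsum fst cl = 0).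
  { rewrite <- (Hs Fin.F1). apply lsum_ext. intros. simpl. ring. }
  assert (HsF : forall j, lsum (fun ct => fst ct * snd (snd ct) j) cl = 0)
    by (intro j; exact (Hs (Fin.FS j))).
  (* move along the dependence [cl] until the first weight vanishes *)
  destruct (exists_min_ratio _ fst (fun e => fst (snd e) / fst e) cl
              (lsum_eq0_exists_pos _ fst cl Hs1 Hex)) as [es [Hes1 [Hes2 Hes3]]].
  set (t := fst (snd es) / fst es).
  assert (Hlam : forall e, In e cl -> 0 <= fst (snd e) /\ X (snd (snd e))).
  { intros e He. rewrite Forall_forall in HF. apply HF. rewrite <- Hm. apply in_map. auto. }
  assert (Ht : 0 <= t).
  { destruct (Hlam es Hes1). apply Rmult_le_pos; [lra|]. left; apply Rinv_0_lt_compat; lra. }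
  set (h := fun e : R * (R * vec n) => (fst (snd e) - t * fst e, snd (snd e))).
  assert (Hh : forall e, In e cl -> 0 <= fst (h e)).
  { intros e He. apply sub_min_ratio_nonneg; [apply Hlam; auto|auto|exact (Hes3 e He)]. }
  assert (Hh0 : fst (h es) = 0) by (simpl; unfold t; field; lra).
  destruct (in_split _ _ Hes1) as [ca [cb Hcl]].
  assert (Hin : forall e, In e (ca ++ cb) -> In e cl).
  { intros e He. rewrite Hcl. apply in_app_or in He. apply in_or_app. simpl. tauto. }
  exists (map h (ca ++ cb)). split; [split|split].
  - apply Forall_forall. intros y Hy. apply in_map_iff in Hy. destruct Hy as [e [<- He]].
    split; [apply Hh; auto|]. simpl. apply Hlam; auto.
  - rewrite lsum_map.
    assert (Hsum : lsum (fun e => fst (h e)) cl = 1).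
    { transitivity (lsum (fun e => fst (snd e)) cl + (- t) * lsum fst cl).
      - rewrite <- lsum_scal, <- lsum_plus. apply lsum_ext. intros. simpl. ring.
      - rewrite Hs1, <- HS, <- Hm, lsum_map. ring. }
    rewrite Hcl, lsum_app, lsum_cons, Hh0 in Hsum. rewrite lsum_app. lra.
  - rewrite length_map, length_app, <- Hm, length_map, Hcl, length_app. simpl. lia.
  - apply vec_ext. intro j. rewrite !lcomb_coord, lsum_map.
    assert (Hc : lsum (fun e => fst (h e) * snd (h e) j) cl = lsum (fun ap => fst ap * snd ap j) l).
    { transitivity (lsum (fun e => fst (snd e) * snd (snd e) j) cl
                    + (- t) * lsum (fun ct => fst ct * snd (snd ct) j) cl).
      - rewrite <- lsum_scal, <- lsum_plus. apply lsum_ext. intros. simpl. unfold vec in *. ring.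
      - rewrite HsF, <- Hm, lsum_map. unfold vec in *. ring. }
    rewrite Hcl, lsum_app, lsum_cons, Hh0 in Hc. rewrite lsum_app. unfold vec in *. lra.
Qed.

Lemma caratheodory n X (x : vec n) : conv X x ->
  exists l, convex_weights X l /\ (length l <= S n)%nat /\ x = lcomb l.
Proof.
  intros [l [HF [HS Hx]]]. subst x.
  assert (Hind : forall m l, length l = m -> convex_weights X l ->
            exists l', convex_weights X l' /\ (length l' <= S n)%nat /\ lcomb l = lcomb l').
  { induction m as [|m IH]; intros l0 Hl0 Hv.
    - exists l0. split; [auto|split; [lia|reflexivity]].
    - destruct (Nat.le_gt_cases (S m) (S n)).
      + exists l0. split; [auto|split; [lia|reflexivity]].
      + destruct (caratheodory_step n X l0 Hv) as [l' [Hv' [Hl' Hc']]]; [lia|].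
        destruct (IH l' ltac:(lia) Hv') as [l'' [H1 [H2 H3]]].
        exists l''. split; [auto|split; [auto|congruence]]. }
  exact (Hind (length l) l eq_refl (conj HF HS)).
Qed.

Lemma caratheodory_exact n X (x : vec n) : nonempty X -> conv X x ->
  exists l, convex_weights X l /\ length l = S n /\ x = lcomb l.
Proof.
  intros [p0 Hp0] Hx. destruct (caratheodory n X x Hx) as [l [[HF HS] [Hl Hxl]]].
  (* pad with points of weight zero *)
  exists (l ++ repeat (0, p0) (S n - length l)).
  assert (Hz : forall a, In a (repeat (0, p0) (S n - length l)) -> a = (0, p0))
    by (intros; eapply repeat_spec; eauto).
  split; [split|split].
  - apply Forall_app. split; auto. apply Forall_forall. intros y Hy.
    rewrite (Hz y Hy). simpl. split; [lra|auto].
  - rewrite lsum_app, HS, lsum_eq0; [ring|]. intros a Ha. now rewrite (Hz a Ha).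
  - rewrite length_app, repeat_length. lia.
  - rewrite lcomb_app, Hxl. apply vec_ext. intro j. unfold vadd.
    rewrite (lcomb_coord _ (repeat _ _)), lsum_eq0; [ring|]. intros a Ha. rewrite (Hz a Ha). simpl. ring.
Qed.

Lemma lcomb_cons n (a : R * vec n) l : lcomb (a :: l) = vadd (vscal (fst a) (snd a)) (lcomb l).
Proof. now destruct a. Qed.

Lemma lcomb_subseq_cv n (X : vec n -> Prop) : is_compact X ->
  forall m (s : nat -> list (R * vec n)),
  (forall k, length (s k) = m /\ Forall (fun ap => 0 <= fst ap <= 1 /\ X (snd ap)) (s k)) ->
  exists phi L, strictly_increasing phi /\ Forall (fun ap => 0 <= fst ap <= 1 /\ X (snd ap)) L /\
   Un_cv (fun k => lsum fst (s (phi k))) (lsum fst L) /\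
   vconv (fun k => lcomb (s (phi k))) (lcomb L).
Proof.
  intros HX. induction m as [|m IH]; intros s Hs.
  - assert (Hnil : forall k, s k = nil)
      by (intro k; destruct (Hs k) as [H _]; destruct (s k); [auto|simpl in H; lia]).
    exists (fun k => k), nil. repeat split; [intro; lia|constructor| |].
    + apply Un_cv_ext with (fun _ => 0); [intro k; now rewrite Hnil|apply Un_cv_const].
    + apply vconv_ext with (fun _ => @vzero n); [intro k; now rewrite Hnil|apply vconv_const].
  - set (a := fun k => hd (0, vzero) (s k)). set (t := fun k => tl (s k)).
    assert (Hst : forall k, s k = a k :: t k).
    { intro k. destruct (Hs k) as [H _]. unfold a, t. destruct (s k); [simpl in H; lia|reflexivity]. }
    assert (Hat : forall k, (0 <= fst (a k) <= 1 /\ X (snd (a k))) /\ length (t k) = m /\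
                            Forall (fun ap => 0 <= fst ap <= 1 /\ X (snd ap)) (t k)).
    { intro k. destruct (Hs k) as [H1 H2]. rewrite Hst in H1, H2. simpl in H1.
      inversion H2 as [|? ? Ha Ht]. split; [auto|split; [lia|auto]]. }
    destruct (IH t) as [phi1 [L1 [Hp1 [HF1 [Hr1 Hv1]]]]]; [intro k; apply (proj2 (Hat _))|].
    destruct (bolzano_weierstrass_R (fun k => fst (a (phi1 k))) 1) as [phi2 [lam [Hp2 Hr2]]].
    { intro k. destruct (Hat (phi1 k)) as [[H _] _]. rewrite Rabs_right; lra. }
    destruct (HX (fun k => snd (a (phi1 (phi2 k))))) as [phi3 [p [Hp3 [Hp Hv3]]]];
      [intro k; apply (proj2 (proj1 (Hat _)))|].
    set (psi := fun k => phi2 (phi3 k)).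
    assert (Hpsi : strictly_increasing psi) by (unfold psi; apply strictly_increasing_comp; auto).
    assert (Hlam : 0 <= lam <= 1)
      by (apply (Un_cv_in_interval _ _ _ _ Hr2); intro k; apply (proj1 (proj1 (Hat _)))).
    exists (fun k => phi1 (psi k)), ((lam, p) :: L1).
    split; [apply strictly_increasing_comp; auto|]. split; [constructor; auto|]. split.
    + apply Un_cv_ext with (fun k => fst (a (phi1 (psi k))) + lsum fst (t (phi1 (psi k))));
        [intro k; now rewrite Hst|].
      apply CV_plus; [apply (Un_cv_subseq _ _ _ Hp3 Hr2)|].
      apply (Un_cv_subseq (fun k => lsum fst (t (phi1 k)))); auto.
    + apply vconv_ext with (fun k => vadd (vscal (fst (a (phi1 (psi k)))) (snd (a (phi1 (psi k)))))
                                          (lcomb (t (phi1 (psi k)))));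
        [intro k; now rewrite Hst, lcomb_cons|].
      apply vconv_add; [apply vconv_scal; auto; apply (Un_cv_subseq _ _ _ Hp3 Hr2)|].
      apply (vconv_subseq _ (fun k => lcomb (t (phi1 k)))); auto.
Qed.

Lemma conv_compact n (X : vec n -> Prop) : nonempty X -> is_compact X -> is_compact (conv X).
Proof.
  intros Hne HX u Hu.
  assert (sel : forall k, {l | convex_weights X l /\ length l = S n /\ u k = lcomb l})
    by (intro k; apply constructive_indefinite_description, caratheodory_exact; auto).
  set (s := fun k => proj1_sig (sel k)).
  assert (Hs : forall k, convex_weights X (s k) /\ length (s k) = S n /\ u k = lcomb (s k))
    by (intro k; exact (proj2_sig (sel k))).
  destruct (lcomb_subseq_cv n X HX (S n) s) as [phi [L [Hphi [HF [Hr Hv]]]]].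
  { intro k. destruct (Hs k) as [[HF HS] [Hl _]]. split; auto.
    rewrite Forall_forall in *. intros y Hy. destruct (HF y Hy). repeat split; auto.
    rewrite <- HS. apply lsum_ge_term; auto. rewrite Forall_forall. intros; apply HF; auto. }
  exists phi, (lcomb L). repeat split; auto.
  - exists L. repeat split.
    + rewrite Forall_forall in *. intros y Hy. destruct (HF y Hy). split; [lra|auto].
    + change (lsum fst L = 1). apply (UL_sequence (fun k => lsum fst (s (phi k)))); auto.
      apply Un_cv_ext with (fun _ => 1); [|apply Un_cv_const].
      intro k. symmetry. apply (Hs (phi k)).
  - apply vconv_ext with (fun k => lcomb (s (phi k))); auto.
    intro k. symmetry. apply (Hs (phi k)).
Qed.

Lemma dot_ge_conv n (X : vec n -> Prop) g xb :
  (forall y, X y -> 0 <= dot g (vsub y xb)) -> forall y, conv X y -> 0 <= dot g (vsub y xb).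
Proof.
  intros H y [l [HF [HS Hy]]]. change (lsum fst l = 1) in HS. subst y.
  rewrite dot_sub_r, dot_lcomb.
  replace (dot g xb) with (lsum (fun ap => fst ap * dot g xb) l)
    by (rewrite (lsum_ext _ _ (fun ap => dot g xb * fst ap)), lsum_scal, HS by (intros; ring); ring).
  assert (lsum (fun ap => fst ap * dot g xb) l <= lsum (fun ap => fst ap * dot g (snd ap)) l).
  { apply lsum_le. intros a Ha. rewrite Forall_forall in HF. destruct (HF a Ha) as [Ha0 HXa].
    specialize (H _ HXa). rewrite dot_sub_r in H. nra. }
  lra.
Qed.

(** * Differentiable convex functions *)

Section Differentiable.

Variables (n q : nat) (F : vec n -> vec q -> R).

Lemma has_gradient_continuous x z gx gz : has_gradient F x z gx gz ->
  forall eps, eps > 0 -> exists delta, delta > 0 /\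
    forall x' z', norm (vsub x' x) + norm (vsub z' z) < delta -> Rabs (F x' z' - F x z) < eps.
Proof.
  intros Hg eps He. destruct (Hg 1 ltac:(lra)) as [d [Hd Hd2]].
  set (K := norm gx + norm gz + 1).
  pose proof (norm_nonneg _ gx); pose proof (norm_nonneg _ gz).
  assert (HK : K > 0) by (unfold K; lra).
  exists (Rmin d (eps / K)). split; [apply Rmin_pos; auto; apply Rdiv_lt_0_compat; lra|].
  intros x' z' Hxz. pose proof (pnorm_le _ _ (vsub x' x) (vsub z' z)) as Hp.
  pose proof (Rmin_l d (eps / K)). pose proof (Rmin_r d (eps / K)).
  specialize (Hd2 x' z' ltac:(fold (pnorm (vsub x' x) (vsub z' z)); lra)).
  fold (pnorm (vsub x' x) (vsub z' z)) in Hd2.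
  pose proof (cauchy_schwarz _ gx (vsub x' x)). pose proof (cauchy_schwarz _ gz (vsub z' z)).
  pose proof (norm_nonneg _ (vsub x' x)). pose proof (norm_nonneg _ (vsub z' z)).
  set (s := norm (vsub x' x) + norm (vsub z' z)) in *.
  assert (Hlin : Rabs (F x' z' - F x z) <= K * s).
  { replace (F x' z' - F x z) with ((F x' z' - F x z - dot gx (vsub x' x) - dot gz (vsub z' z))
                                    + dot gx (vsub x' x) + dot gz (vsub z' z)) by ring.
    eapply Rle_trans; [apply Rabs_triang|].
    eapply Rle_trans; [apply Rplus_le_compat_r, Rabs_triang|].
    assert (norm gx * norm (vsub x' x) <= norm gx * s) by (apply Rmult_le_compat_l; unfold s; lra).
    assert (norm gz * norm (vsub z' z) <= norm gz * s) by (apply Rmult_le_compat_l; unfold s; lra).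
    unfold K. lra. }
  assert (K * s < eps).
  { apply Rlt_le_trans with (K * (eps / K)); [apply Rmult_lt_compat_l; lra|].
    right; field; lra. }
  lra.
Qed.

Lemma has_gradient_seq_continuous x z gx gz : has_gradient F x z gx gz ->
  forall (xs : nat -> vec n) (zs : nat -> vec q),
  vconv xs x -> vconv zs z -> Un_cv (fun k => F (xs k) (zs k)) (F x z).
Proof.
  intros Hg xs zs Hx Hz eps He.
  destruct (has_gradient_continuous x z gx gz Hg eps He) as [d [Hd Hd2]].
  destruct (Hx (d/2)) as [N1 H1]; [lra|]. destruct (Hz (d/2)) as [N2 H2]; [lra|].
  exists (max N1 N2). intros k Hk. apply Hd2.
  specialize (H1 k ltac:(lia)). specialize (H2 k ltac:(lia)). lra.
Qed.

Lemma has_gradient_directional x z gx gz : has_gradient F x z gx gz ->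
  forall dx dz eps, eps > 0 -> exists a0, a0 > 0 /\ forall a, 0 < a <= a0 ->
    Rabs (F (vadd x (vscal a dx)) (vadd z (vscal a dz)) - F x z - a * (dot gx dx + dot gz dz))
    <= eps * a.
Proof.
  intros Hg dx dz eps He. set (r0 := pnorm dx dz). pose proof (pnorm_nonneg _ _ dx dz) as Hr0.
  fold r0 in Hr0.
  destruct (Hg (eps / (r0 + 1))) as [d [Hd Hd2]]; [apply Rdiv_lt_0_compat; lra|].
  exists (d / (r0 + 1)). split; [apply Rdiv_lt_0_compat; lra|]. intros a Ha.
  specialize (Hd2 (vadd x (vscal a dx)) (vadd z (vscal a dz))).
  replace (vsub (vadd x (vscal a dx)) x) with (vscal a dx) in Hd2 by vring.
  replace (vsub (vadd z (vscal a dz)) z) with (vscal a dz) in Hd2 by vring.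
  fold (pnorm (vscal a dx) (vscal a dz)) in Hd2.
  rewrite pnorm_scal, Rabs_right, !dot_scal_r in Hd2 by lra. fold r0 in Hd2.
  assert (Har : a * (r0 + 1) <= d).
  { destruct Ha as [_ Ha]. apply Rmult_le_compat_r with (r := r0 + 1) in Ha; [|lra].
    replace (d / (r0 + 1) * (r0 + 1)) with d in Ha by (field; lra). lra. }
  specialize (Hd2 ltac:(nra)).
  replace (F (vadd x (vscal a dx)) (vadd z (vscal a dz)) - F x z - a * (dot gx dx + dot gz dz))
    with (F (vadd x (vscal a dx)) (vadd z (vscal a dz)) - F x z - a * dot gx dx - a * dot gz dz)
    by ring.
  eapply Rle_trans; [apply Hd2|].
  assert (eps / (r0 + 1) * r0 <= eps).
  { apply Rle_trans with (eps / (r0 + 1) * (r0 + 1)); [apply Rmult_le_compat_l; [|lra]|right; field; lra].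
    left. apply Rdiv_lt_0_compat; lra. }
  nra.
Qed.

Lemma directional_nonneg_of_min x z gx gz dx dz : has_gradient F x z gx gz ->
  (forall a, 0 < a <= 1 -> F x z <= F (vadd x (vscal a dx)) (vadd z (vscal a dz))) ->
  0 <= dot gx dx + dot gz dz.
Proof.
  intros Hg Hmin. apply Rnot_lt_le. intro Hneg.
  set (s := dot gx dx + dot gz dz) in *.
  destruct (has_gradient_directional x z gx gz Hg dx dz (- s / 2)) as [a0 [Ha0 Hdir]]; [lra|].
  set (a := Rmin a0 1).
  assert (Ha : 0 < a <= a0) by (split; [apply Rmin_pos; lra|apply Rmin_l]).
  specialize (Hdir a Ha). fold s in Hdir. apply Rabs_le_inv in Hdir.
  specialize (Hmin a (conj (proj1 Ha) (Rmin_r a0 1))). nra.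
Qed.

Lemma convex_gradient_ineq xb zb gx gz x z : jointly_convex F -> has_gradient F xb zb gx gz ->
  F xb zb + (dot gx (vsub x xb) + dot gz (vsub z zb)) <= F x z.
Proof.
  intros Hconv Hg. apply Rnot_lt_le. intro Hlt.
  set (lin := dot gx (vsub x xb) + dot gz (vsub z zb)) in *.
  set (D0 := F xb zb + lin - F x z).
  destruct (has_gradient_directional xb zb gx gz Hg (vsub x xb) (vsub z zb) (D0 / 2))
    as [a0 [Ha0 Hdir]]; [unfold D0; lra|].
  set (a := Rmin a0 1).
  assert (Ha : 0 < a <= a0) by (split; [apply Rmin_pos; lra|apply Rmin_l]).
  assert (Ha1 : a <= 1) by apply Rmin_r.
  specialize (Hdir a Ha). fold lin in Hdir. apply Rabs_le_inv in Hdir.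
  replace (vadd xb (vscal a (vsub x xb))) with (vadd (vscal a x) (vscal (1 - a) xb)) in Hdir by vring.
  replace (vadd zb (vscal a (vsub z zb))) with (vadd (vscal a z) (vscal (1 - a) zb)) in Hdir by vring.
  pose proof (Hconv x z xb zb a ltac:(lra)). unfold D0 in *. nra.
Qed.

End Differentiable.

Lemma continuous2_seq n q m (G : vec n -> vec q -> vec m) : continuous2 G ->
  forall x z (xs : nat -> vec n) (zs : nat -> vec q),
  vconv xs x -> vconv zs z -> vconv (fun k => G (xs k) (zs k)) (G x z).
Proof.
  intros HG x z xs zs Hx Hz eps He. destruct (HG x z eps He) as [d [Hd Hd2]].
  destruct (Hx (d/2)) as [N1 H1]; [lra|]. destruct (Hz (d/2)) as [N2 H2]; [lra|].
  exists (max N1 N2). intros k Hk. apply Hd2.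
  specialize (H1 k ltac:(lia)). specialize (H2 k ltac:(lia)).
  pose proof (pnorm_le _ _ (vsub (xs k) x) (vsub (zs k) z)). unfold pnorm in *. lra.
Qed.

(** * Bounded level sets *)

Definition seq_continuous2 {n q} (F : vec n -> vec q -> R) : Prop :=
  forall x z (xs : nat -> vec n) (zs : nat -> vec q),
  vconv xs x -> vconv zs z -> Un_cv (fun k => F (xs k) (zs k)) (F x z).

Lemma Un_cv_0_of_harmonic_bound (u : nat -> R) c :
  (forall j, 0 <= u j /\ u j * (INR j + 1) <= c) -> Un_cv u 0.
Proof.
  intros Hu eps He. destruct (INR_unbounded (c / eps)) as [N HN]. exists N. intros j Hj.
  destruct (Hu j) as [H0 H1]. unfold Rdist. rewrite Rminus_0_r, Rabs_right by lra.
  apply le_INR in Hj. pose proof (pos_INR j).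
  assert (c < eps * (INR j + 1)).
  { apply Rmult_lt_reg_r with (/ eps); [apply Rinv_0_lt_compat; lra|].
    replace (eps * (INR j + 1) * / eps) with (INR j + 1) by (field; lra). unfold Rdiv in HN. lra. }
  apply Rmult_lt_reg_r with (INR j + 1); lra.
Qed.

Lemma vconv_scal_bounded_0 n (a : nat -> R) (p : nat -> vec n) M :
  Un_cv a 0 -> (forall k, norm (p k) <= M) -> vconv (fun k => vscal (a k) (p k)) vzero.
Proof.
  intros Ha Hp eps He.
  assert (HM : 0 <= M) by (specialize (Hp O); pose proof (norm_nonneg _ (p O)); lra).
  destruct (Ha (eps / (M + 1))) as [N HN]; [apply Rdiv_lt_0_compat; lra|]. exists N. intros k Hk.
  specialize (HN k Hk). unfold Rdist in HN. rewrite Rminus_0_r in HN.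
  replace (vsub (vscal (a k) (p k)) vzero) with (vscal (a k) (p k)) by vring.
  rewrite norm_scal. specialize (Hp k). pose proof (Rabs_pos (a k)). pose proof (norm_nonneg _ (p k)).
  apply Rle_lt_trans with (Rabs (a k) * (M + 1)); [apply Rmult_le_compat_l; lra|].
  apply Rlt_le_trans with (eps / (M + 1) * (M + 1)); [apply Rmult_lt_compat_r; lra|].
  right; field; lra.
Qed.

Lemma ratio_harmonic_bound r s j K :
  0 <= r -> r < INR K -> INR (j + K) + 1 < s -> 0 <= r / s <= 1 /\ r / s * (INR j + 1) <= r.
Proof.
  intros Hr HK Hs. rewrite plus_INR in Hs. pose proof (pos_INR j).
  assert (Hs0 : 0 < s) by lra.
  repeat split.
  - apply Rmult_le_pos; [lra|]. left; apply Rinv_0_lt_compat; lra.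
  - apply Rmult_le_reg_r with s; [lra|]. unfold Rdiv. rewrite Rmult_assoc, Rinv_l by lra. lra.
  - apply Rmult_le_reg_r with s; [lra|].
    replace (r / s * (INR j + 1) * s) with (r * (INR j + 1)) by (field; lra). nra.
Qed.

Section LevelSets.

Variables (n q : nat) (F : vec n -> vec q -> R) (Z : vec q -> Prop).
Hypotheses (HFconv : jointly_convex F) (HFcont : seq_continuous2 F)
  (HZcl : is_closed Z) (HZcv : is_convex Z).
Variables (x0 : vec n) (z0 : vec q) (c Mx : R).
Hypotheses (Hz0 : Z z0) (Hc0 : F x0 z0 <= c).

(** Convex combinations with [(x0, z0)] pull [(xs k, zs k)] back to distance [r] from [z0]
    without leaving the level set; in the limit they land on the ray of direction [ds]. *)
Lemma level_set_contains_ray (xs : nat -> vec n) (zs : nat -> vec q) ds :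
  (forall k, norm (vsub (xs k) x0) <= Mx) -> (forall k, Z (zs k)) ->
  (forall k, F (xs k) (zs k) <= c) -> (forall k, INR k + 1 < norm (vsub (zs k) z0)) ->
  vconv (fun k => vscal (/ norm (vsub (zs k) z0)) (vsub (zs k) z0)) ds ->
  forall r, 0 <= r -> Z (vadd z0 (vscal r ds)) /\ F x0 (vadd z0 (vscal r ds)) <= c.
Proof.
  intros HMx HZs Hcs Hrho0 Hds r Hr.
  set (rho := fun k => norm (vsub (zs k) z0)).
  assert (Hrho : forall k, INR k + 1 < rho k) by exact Hrho0. clear Hrho0.
  destruct (INR_unbounded r) as [K HK].
  set (lam := fun j => r / rho (j + K)%nat).
  assert (Hlam : forall j, 0 <= lam j <= 1 /\ lam j * (INR j + 1) <= r)
    by (intro j; apply ratio_harmonic_bound with K; auto).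
  set (Px := fun j => vadd (vscal (lam j) (xs (j + K)%nat)) (vscal (1 - lam j) x0)).
  set (Pz := fun j => vadd (vscal (lam j) (zs (j + K)%nat)) (vscal (1 - lam j) z0)).
  assert (HPz : forall j, Pz j = vadd z0 (vscal r (vscal (/ rho (j + K)%nat) (vsub (zs (j + K)%nat) z0)))).
  { intro j. specialize (Hrho (j + K)%nat). pose proof (pos_INR (j + K)).
    apply vec_ext; intro i. unfold Pz, lam, vadd, vscal, vsub. field. lra. }
  assert (HPx : vconv Px x0).
  { assert (Hvanish : vconv (fun j => vscal (lam j) (vsub (xs (j + K)%nat) x0)) vzero).
    { apply vconv_scal_bounded_0 with Mx; auto.
      apply Un_cv_0_of_harmonic_bound with r. intro j; specialize (Hlam j); lra. }
    pose proof (vconv_add _ _ _ _ _ (vconv_const _ x0) Hvanish) as Hsum.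
    replace (vadd x0 vzero) with x0 in Hsum by vring.
    refine (vconv_ext _ _ _ _ _ Hsum). intro j. unfold Px. vring. }
  assert (HPzc : vconv Pz (vadd z0 (vscal r ds))).
  { apply vconv_ext with (fun j => vadd z0 (vscal r (vscal (/ rho (j + K)%nat) (vsub (zs (j + K)%nat) z0))));
      [intro j; now rewrite HPz|].
    apply vconv_add; [apply vconv_const|]. apply vconv_scal; [apply Un_cv_const|].
    apply (vconv_subseq _ (fun k => vscal (/ rho k) (vsub (zs k) z0)) ds (fun j => (j + K)%nat));
      [intro; lia|auto]. }
  split.
  - apply (HZcl Pz); auto. intro j. apply HZcv; auto. apply Hlam.
  - apply (@Rle_cv_lim (fun j => F (Px j) (Pz j)) (fun _ => c)); auto using Un_cv_const.
    intro j. eapply Rle_trans; [apply HFconv; apply Hlam|].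
    specialize (Hlam j). specialize (Hcs (j + K)%nat). nra.
Qed.

Lemma level_sequence_bounded (xs : nat -> vec n) (zs : nat -> vec q) :
  inf_compact Z (F x0) ->
  (forall k, norm (vsub (xs k) x0) <= Mx) -> (forall k, Z (zs k)) -> (forall k, F (xs k) (zs k) <= c) ->
  exists M, forall k, norm (vsub (zs k) z0) <= M.
Proof.
  intros Hinf HMx HZs Hcs. apply NNPP. intro HN.
  assert (sel : forall m : nat, {k | INR m + 1 < norm (vsub (zs k) z0)}).
  { intro m. apply constructive_indefinite_description. apply NNPP. intro H. apply HN.
    exists (INR m + 1). intro k. apply Rnot_lt_le. intro. apply H. exists k; auto. }
  set (km := fun m => proj1_sig (sel m)).
  assert (Hkm : forall m, INR m + 1 < norm (vsub (zs (km m)) z0)) by (intro m; exact (proj2_sig (sel m))).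
  set (d := fun m => vscal (/ norm (vsub (zs (km m)) z0)) (vsub (zs (km m)) z0)).
  assert (Hd1 : forall m, norm (d m) = 1).
  { intro m. specialize (Hkm m). pose proof (pos_INR m). unfold d.
    rewrite norm_scal, Rabs_right; [field; lra|]. left; apply Rinv_0_lt_compat; lra. }
  destruct (bolzano_weierstrass q d 1) as [psi [ds [Hpsi Hdc]]]; [intro; rewrite Hd1; lra|].
  assert (Hds : norm ds = 1).
  { apply (UL_sequence (fun k => norm (d (psi k)))); [apply Un_cv_norm; auto|].
    apply Un_cv_ext with (fun _ => 1); [intro; now rewrite Hd1|apply Un_cv_const]. }
  assert (Ray := level_set_contains_ray (fun j => xs (km (psi j))) (fun j => zs (km (psi j))) ds
                   (fun j => HMx _) (fun j => HZs _) (fun j => Hcs _)).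
  destruct (compact_bounded _ _ (Hinf c)) as [M HM].
  destruct (INR_unbounded (M + norm z0)) as [j Hj].
  destruct (Ray ltac:(intro k; pose proof (le_INR _ _ (strictly_increasing_ge _ Hpsi k));
                      specialize (Hkm (psi k)); lra) Hdc (INR j) (pos_INR j)) as [R1 R2].
  specialize (HM _ (conj R1 R2)).
  pose proof (norm_sub_le _ (vadd z0 (vscal (INR j) ds)) z0) as Htri.
  replace (vsub (vadd z0 (vscal (INR j) ds)) z0) with (vscal (INR j) ds) in Htri by vring.
  rewrite norm_scal, Hds, Rabs_right in Htri by (apply Rle_ge, pos_INR). lra.
Qed.

End LevelSets.

(** * Convergence of SDM-GS *)

Lemma segment_left n (a b : vec n) : segment a b a.
Proof. exists 0. split; [lra|vring]. Qed.

Section SDMConvergence.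

Variables (n q : nat) (F : vec n -> vec q -> R)
  (Gx : vec n -> vec q -> vec n) (Gz : vec n -> vec q -> vec q)
  (X : vec n -> Prop) (Z : vec q -> Prop).
Hypotheses (HFconv : jointly_convex F)
  (Hgrad : forall x z, has_gradient F x z (Gx x z) (Gz x z)) (HGx : continuous2 Gx)
  (HXne : nonempty X) (HXcomp : is_compact X) (HZcl : is_closed Z) (HZcv : is_convex Z).

(** [u], [w], [p] stand for the iterates [x (S k)], [z (S k)], [xhat (S k)]: [x 0] need not lie
    in [D 0], so descent only starts at [k = 1]. *)
Variables (u : nat -> vec n) (w : nat -> vec q) (p : nat -> vec n).
Hypotheses (Hinf : inf_compact Z (F (u O)))
  (Hu : forall k, conv X (u k))
  (Hw : forall k, is_argmin Z (F (u k)) (w k))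
  (Hdesc : forall k y, segment (u k) (p k) y -> F (u (S k)) (w (S k)) <= F y (w k))
  (Hp : forall k, is_argmin X (fun xx => dot (Gx (u k) (w k)) (vsub xx (u k))) (p k)).

Lemma F_seq_continuous : seq_continuous2 F.
Proof. intros x z. apply (has_gradient_seq_continuous _ _ F x z (Gx x z) (Gz x z)), Hgrad. Qed.

Lemma sdm_values_nonincreasing k m : (k <= m)%nat -> F (u m) (w m) <= F (u k) (w k).
Proof.
  induction 1 as [|m _ IH]; [lra|].
  pose proof (Hdesc m (u m) (segment_left _ _ _)). pose proof (proj2 (Hw m) _ (proj1 (Hw m))). lra.
Qed.

Lemma sdm_iterates_bounded : exists Mx Mz, forall k, norm (u k) <= Mx /\ norm (w k) <= Mz.
Proof.
  destruct (compact_bounded _ _ (conv_compact _ X HXne HXcomp)) as [Mx HMx].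
  destruct (level_sequence_bounded n q F Z HFconv F_seq_continuous HZcl HZcv (u O) (w O)
              (F (u O) (w O)) (2 * Mx) (proj1 (Hw O)) (Rle_refl _) u w Hinf) as [Mz HMz].
  - intro k. eapply Rle_trans; [apply norm_sub_le|]. pose proof (HMx _ (Hu k)). pose proof (HMx _ (Hu O)). lra.
  - intro k; apply Hw.
  - intro k. apply sdm_values_nonincreasing. lia.
  - exists Mx, (Mz + norm (w O)). intro k. split; [apply HMx, Hu|].
    pose proof (norm_le_sub _ (w k) (w O)). specialize (HMz k). lra.
Qed.

Lemma sdm_limit_point_exists : exists xb zb, is_limit_point u w xb zb.
Proof.
  destruct sdm_iterates_bounded as [Mx [Mz HM]].
  destruct (bolzano_weierstrass n u Mx (fun k => proj1 (HM k))) as [phi1 [xb [Hp1 Hc1]]].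
  destruct (bolzano_weierstrass q (fun k => w (phi1 k)) Mz (fun k => proj2 (HM _)))
    as [phi2 [zb [Hp2 Hc2]]].
  exists xb, zb, (fun k => phi1 (phi2 k)). repeat split; auto.
  - apply strictly_increasing_comp; auto.
  - apply (vconv_subseq _ (fun k => u (phi1 k))); auto.
Qed.

Section LimitPoint.

Variables (xb : vec n) (zb : vec q) (phi : nat -> nat).
Hypotheses (Hphi : strictly_increasing phi)
  (Hxb : vconv (fun k => u (phi k)) xb) (Hzb : vconv (fun k => w (phi k)) zb).

Lemma sdm_limit_value_le m : F xb zb <= F (u m) (w m).
Proof.
  apply (@Rle_cv_lim (fun j => F (u (phi (j + m)%nat)) (w (phi (j + m)%nat))) (fun _ => F (u m) (w m)));
    [|apply (CV_shift' (fun k => F (u (phi k)) (w (phi k)))), F_seq_continuous; auto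
     |apply Un_cv_const].
  intro j. apply sdm_values_nonincreasing. pose proof (strictly_increasing_ge _ Hphi (j + m)). lia.
Qed.

Lemma sdm_limit_z_min zz : Z zz -> F xb zb <= F xb zz.
Proof.
  intros Hzz. apply (@Rle_cv_lim (fun k => F (u (phi k)) (w (phi k))) (fun k => F (u (phi k)) zz));
    auto using F_seq_continuous, vconv_const.
  intro k. apply (Hw (phi k)), Hzz.
Qed.

Lemma sdm_limit_z_stationary zz : Z zz -> 0 <= dot (Gz xb zb) (vsub zz zb).
Proof.
  intros Hzz. replace (dot (Gz xb zb) (vsub zz zb))
    with (dot (Gx xb zb) vzero + dot (Gz xb zb) (vsub zz zb)) by (rewrite dot_zero_r; ring).
  apply (directional_nonneg_of_min n q F xb zb); [apply Hgrad|]. intros a Ha.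
  replace (vadd xb (vscal a vzero)) with xb by vring.
  replace (vadd zb (vscal a (vsub zz zb))) with (vadd (vscal a zz) (vscal (1 - a) zb)) by vring.
  apply sdm_limit_z_min, HZcv; auto; [apply (HZcl (fun k => w (phi k))); auto; intro; apply Hw|lra].
Qed.

(** Along a further subsequence [p] converges to some [xh] in [X]; the descent along the
    segments [[u k, p k]] passes to the limit and makes [xh - xb] a direction of
    nonnegative slope, while minimality of [p k] bounds every other slope below by it. *)
Lemma sdm_limit_x_stationary y : X y -> 0 <= dot (Gx xb zb) (vsub y xb).
Proof.
  intros Hy.
  destruct (HXcomp (fun k => p (phi k))) as [psi [xh [Hpsi [Hxh Hpc]]]]; [intro; apply Hp|].
  set (chi := fun k => phi (psi k)).
  assert (Hu' : vconv (fun k => u (chi k)) xb) by (apply (vconv_subseq _ (fun k => u (phi k))); auto).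
  assert (Hw' : vconv (fun k => w (chi k)) zb) by (apply (vconv_subseq _ (fun k => w (phi k))); auto).
  assert (Hd : vconv (fun k => vsub (p (chi k)) (u (chi k))) (vsub xh xb)) by (apply vconv_sub; auto).
  assert (Hslope : 0 <= dot (Gx xb zb) (vsub xh xb) + dot (Gz xb zb) vzero).
  { apply (directional_nonneg_of_min n q F xb zb); [apply Hgrad|]. intros a Ha.
    replace (vadd zb (vscal a vzero)) with zb by vring.
    apply (@Rle_cv_lim (fun _ => F xb zb)
             (fun k => F (vadd (u (chi k)) (vscal a (vsub (p (chi k)) (u (chi k))))) (w (chi k))));
      [|apply Un_cv_const|apply F_seq_continuous; auto].
    - intro k. eapply Rle_trans; [apply (sdm_limit_value_le (S (chi k)))|].
      apply Hdesc. exists a. split; [lra|reflexivity].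
    - apply vconv_add, vconv_scal; auto using Un_cv_const. }
  rewrite dot_zero_r, Rplus_0_r in Hslope.
  assert (Hmin : dot (Gx xb zb) (vsub xh xb) <= dot (Gx xb zb) (vsub y xb)).
  { assert (HG : vconv (fun k => Gx (u (chi k)) (w (chi k))) (Gx xb zb)) by (apply continuous2_seq; auto).
    apply (@Rle_cv_lim (fun k => dot (Gx (u (chi k)) (w (chi k))) (vsub (p (chi k)) (u (chi k))))
                       (fun k => dot (Gx (u (chi k)) (w (chi k))) (vsub y (u (chi k)))));
      [intro k; apply (Hp (chi k)), Hy| |]; apply Un_cv_dot; auto.
    apply vconv_sub; auto using vconv_const. }
  lra.
Qed.

Lemma sdm_limit_optimal : is_optimal F (conv X) Z xb zb.
Proof.
  assert (HC : is_closed (conv X)) by (apply compact_closed, conv_compact; auto).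
  split; [apply (HC (fun k => u (phi k))); auto|].
  split; [apply (HZcl (fun k => w (phi k))); auto; intro; apply Hw|].
  intros x z Hx Hz.
  pose proof (convex_gradient_ineq n q F xb zb (Gx xb zb) (Gz xb zb) x z HFconv (Hgrad xb zb)).
  pose proof (dot_ge_conv n X (Gx xb zb) xb sdm_limit_x_stationary x Hx).
  pose proof (sdm_limit_z_stationary z Hz). lra.
Qed.

End LimitPoint.

End SDMConvergence.

Section GaussSeidel.

Variables (n q : nat) (F : vec n -> vec q -> R) (D : vec n -> Prop) (Z : vec q -> Prop)
  (tmax : nat) (xt : nat -> vec n) (zt : nat -> vec q).
Hypotheses (Htmax : (1 <= tmax)%nat) (Hz0 : Z (zt O))
  (Hinx : forall t, (1 <= t <= tmax)%nat -> is_argmin D (fun xx => F xx (zt (t - 1)%nat)) (xt t))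
  (Hinz : forall t, (1 <= t <= tmax)%nat -> is_argmin Z (fun zz => F (xt t) zz) (zt t)).

Lemma gauss_seidel_value_le t : (1 <= t <= tmax)%nat -> F (xt t) (zt t) <= F (xt 1%nat) (zt O).
Proof.
  induction t as [|[|t] IH]; intros Ht; [lia| |].
  - apply (Hinz 1%nat Ht), Hz0.
  - specialize (IH ltac:(lia)).
    pose proof (proj2 (Hinz (S (S t)) Ht) _ (proj1 (Hinz (S t) ltac:(lia)))).
    pose proof (proj2 (Hinx (S (S t)) Ht) _ (proj1 (Hinx (S t) ltac:(lia)))).
    simpl in *. lra.
Qed.

Lemma gauss_seidel_descent y : D y -> F (xt tmax) (zt tmax) <= F y (zt O).
Proof.
  intros Hy. eapply Rle_trans; [apply gauss_seidel_value_le; lia|].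
  apply (Hinx 1%nat ltac:(lia)), Hy.
Qed.

End GaussSeidel.

Lemma limit_point_of_shift n q (x : nat -> vec n) (z : nat -> vec q) xb zb :
  is_limit_point (fun k => x (S k)) (fun k => z (S k)) xb zb -> is_limit_point x z xb zb.
Proof. intros [phi [Hphi [Hx Hz]]]. exists (fun k => S (phi k)). repeat split; auto. intro k. apply -> Nat.succ_lt_mono. apply Hphi. Qed.

Lemma limit_point_shift n q (x : nat -> vec n) (z : nat -> vec q) xb zb :
  is_limit_point x z xb zb -> is_limit_point (fun k => x (S k)) (fun k => z (S k)) xb zb.
Proof.
  intros [phi [Hphi [Hx Hz]]].
  assert (Hpos : forall k, phi (S k) = S (pred (phi (S k))))
    by (intro k; pose proof (strictly_increasing_ge _ Hphi (S k)); lia).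
  exists (fun k => pred (phi (S k))). repeat split.
  - intro k. specialize (Hphi (S k)). pose proof (Hpos k). pose proof (Hpos (S k)). lia.
  - apply vconv_ext with (fun k => x (phi (S k))); [intro k; now rewrite Hpos at 1|].
    apply (vconv_subseq _ (fun k => x (phi k))); auto. intro; lia.
  - apply vconv_ext with (fun k => z (phi (S k))); [intro k; now rewrite Hpos at 1|].
    apply (vconv_subseq _ (fun k => z (phi k))); auto. intro; lia.
Qed.

Theorem proposition3
  (n q : nat) (F : vec n -> vec q -> R)
  (Gx : vec n -> vec q -> vec n) (Gz : vec n -> vec q -> vec q)
  (X : vec n -> Prop) (Z : vec q -> Prop) (tmax : nat)
  (x : nat -> vec n) (z : nat -> vec q) (xhat : nat -> vec n)
  (D : nat -> vec n -> Prop)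
  (xt : nat -> nat -> vec n) (zt : nat -> nat -> vec q)
  (HFconv : jointly_convex F)
  (HFC1 : C1_with_gradient F Gx Gz)
  (HXne : nonempty X) (HXcomp : is_compact X)
  (HZne : nonempty Z) (HZcl : is_closed Z) (HZcv : is_convex Z)
  (HinfC : forall xx, conv X xx -> inf_compact Z (fun zz => F xx zz))
  (Htmax : (1 <= tmax)%nat)
  (Hx0 : conv X (x 0%nat))
  (Hz0 : is_argmin Z (fun zz => F (x 0%nat) zz) (z 0%nat))
  (HD0ne : nonempty (D 0%nat)) (HD0cl : is_closed (D 0%nat))
  (HD0cv : is_convex (D 0%nat)) (HD0sub : subset (D 0%nat) (conv X))
  (Hin0x : forall k, xt k 0%nat = x k)
  (Hin0z : forall k, zt k 0%nat = z k)
  (Hinx : forall k t, (1 <= t <= tmax)%nat ->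
     is_argmin (D k) (fun xx => F xx (zt k (t - 1)%nat)) (xt k t))
  (Hinz : forall k t, (1 <= t <= tmax)%nat ->
     is_argmin Z (fun zz => F (xt k t) zz) (zt k t))
  (Hxnext : forall k, x (S k) = xt k tmax)
  (Hznext : forall k, z (S k) = zt k tmax)
  (Hxhat : forall k,
     is_argmin X (fun xx => dot (Gx (x (S k)) (z (S k))) (vsub xx (x (S k)))) (xhat (S k)))
  (HDcl : forall k, is_closed (D (S k)))
  (HDcv : forall k, is_convex (D (S k)))
  (HDseg : forall k, subset (segment (x (S k)) (xhat (S k))) (D (S k)))
  (HDsub : forall k, subset (D (S k)) (conv X)) :
  (exists xb zb, is_limit_point x z xb zb) /\
  (forall xb zb, is_limit_point x z xb zb -> is_optimal F (conv X) Z xb zb).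
Proof.
  destruct HFC1 as [Hgrad [HGx _]].
  assert (Hw : forall k, is_argmin Z (F (x (S k))) (z (S k))).
  { intro k. rewrite Hznext, Hxnext. apply Hinz; lia. }
  assert (Hu : forall k, conv X (x (S k))) by (intro k; apply (HDsub k), (HDseg k), segment_left).
  assert (Hdesc : forall k y, segment (x (S k)) (xhat (S k)) y ->
                              F (x (S (S k))) (z (S (S k))) <= F y (z (S k))).
  { intros k y Hy. rewrite Hxnext, Hznext, <- (Hin0z (S k)).
    apply (gauss_seidel_descent n q F (D (S k)) Z); auto; [|apply HDseg; auto].
    rewrite Hin0z. apply Hw. }
  split.
  - destruct (sdm_limit_point_exists n q F Gx Gz X Z HFconv Hgrad HXne HXcomp HZcl HZcv
                (fun k => x (S k)) (fun k => z (S k)) (fun k => xhat (S k))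
                (HinfC _ (Hu O)) Hu Hw Hdesc) as [xb [zb Hl]].
    exists xb, zb. apply limit_point_of_shift; auto.
  - intros xb zb Hl. destruct (limit_point_shift _ _ x z xb zb Hl) as [phi [Hphi [Hxb Hzb]]].
    exact (sdm_limit_optimal n q F Gx Gz X Z HFconv Hgrad HGx HXne HXcomp HZcl HZcv
             (fun k => x (S k)) (fun k => z (S k)) (fun k => xhat (S k))
             Hu Hw Hdesc Hxhat xb zb phi Hphi Hxb Hzb).
Qed.
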